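(* Let $A\to M$, $B\to M$ be Lie algebroids, $(\nabla^{AB},\nabla^{AC},R_A)$ a 2-representation of $A$ on $\partial_B\colon C\to B$ and $(\nabla^{BA},\nabla^{BC},R_B)$ a 2-representation of $B$ on $\partial_A\colon C\to A$ forming a matched pair. Then $C$ is a Lie algebroid with anchor $\rho_C:=\rho_A\circ\partial_A=\rho_B\circ\partial_B$ and bracket $[c_1,c_2]=\nabla_{\partial_Ac_1}c_2-\nabla_{\partial_Bc_2}c_1$, and $\partial_A\colon C\to A$ and $\partial_B\colon C\to B$ are Lie algebroid morphisms.
   Context: A 2-representation of a Lie algebroid $A$ on a complex $\partial_B\colon C\to B$ is a triple $(\nabla^{AB},\nabla^{AC},R_A)$: $A$-connections on $B$ and $C$ with $\partial_B\circ\nabla^{AC}=\nabla^{AB}\circ\partial_B$, and $R_A\in\Omega^2(A,\mathrm{Hom}(B,C))$ with $R_{\nabla^{AC}}=R_A\circ\partial_B$, $R_{\nabla^{AB}}=\partial_B\circ R_A$, $\mathrm d_{\nabla^{\mathrm{Hom}}}R_A=0$. Similarly for $B$ on $\partial_A\colon C\to A$ with $R_B\in\Omega^2(B,\mathrm{Hom}(A,C))$. Writing $\nabla$ for all four connections, they form a matched pair if for all $a,a_i\in\Gamma(A)$, $b,b_i\in\Gamma(B)$, $c,c_i\in\Gamma(C)$: (M1) $\rho_A\partial_A=\rho_B\partial_B$; (M2) $\nabla_{\partial_Ac_1}c_2-\nabla_{\partial_Bc_2}c_1=-\nabla_{\partial_Ac_2}c_1+\nabla_{\partial_Bc_1}c_2$;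 (M3) $[a,\partial_Ac]=\partial_A(\nabla_ac)-\nabla_{\partial_Bc}a$; (M4) $[b,\partial_Bc]=\partial_B(\nabla_bc)-\nabla_{\partial_Ac}b$; (M5) $[\rho_A(a),\rho_B(b)]=\rho_B(\nabla_ab)-\rho_A(\nabla_ba)$; (M6) $\nabla_b\nabla_ac-\nabla_a\nabla_bc-\nabla_{\nabla_ba}c+\nabla_{\nabla_ab}c=R_B(b,\partial_Bc)a-R_A(a,\partial_Ac)b$; (M7) $\partial_A(R_A(a_1,a_2)b)=-\nabla_b[a_1,a_2]+[\nabla_ba_1,a_2]+[a_1,\nabla_ba_2]+\nabla_{\nabla_{a_2}b}a_1-\nabla_{\nabla_{a_1}b}a_2$; (M8) $\partial_B(R_B(b_1,b_2)a)=-\nabla_a[b_1,b_2]+[\nabla_ab_1,b_2]+[b_1,\nabla_ab_2]+\nabla_{\nabla_{b_2}a}b_1-\nabla_{\nabla_{b_1}a}b_2$; (M9) $\mathrm d_{\nabla^A}R_B=\mathrm d_{\nabla^B}R_A$, where $R_B$ is viewed in $\Omega^1(A,\wedge^2B^*\otimes C)$ via $a\mapsto((b_1,b_2)\mapsto R_B(b_1,b_2)a)$, $R_A$ in $\Omega^1(B,\wedge^2A^*\otimes C)$ likewise, $\nabla^A,\nabla^B$ the induced connections on $\wedge^2B^*\otimes C$, $\wedge^2A^*\otimes C$, and $\Omega^2(A,\wedge^2B^*\otimes C)\cong\Omega^2(B,\wedge^2A^*\otimes C)$ via $\omega(a_1,a_2)(b_1,b_2)=\omega'(b_1,b_2)(a_1,a_2)$.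 *)

(* Lie algebroids over a base M are modelled algebraically
   (Lie--Rinehart style): R plays the role of C^oo(M) (a commutative algebra
   over a characteristic-0 field k, standing for the reals), and the
   R-modules A, B, C play the role of the spaces of sections Γ(A), Γ(B), Γ(C).
   Vector fields are k-linear derivations of R. *)
From HB Require Import structures.
From mathcomp Require Import all_boot all_order all_algebra.
Set Implicit Arguments. Unset Strict Implicit. Unset Printing Implicit Defensive.
Import GRing.Theory Num.Theory.
Local Open Scope ring_scope.

Section LieAlgebroids.
Variables (k : numFieldType) (R : comAlgType k).

Definition is_derivation (D : R -> R) : Prop :=
  (forall (x : k) (f g : R), D (x *: f + g) = x *: D f + D g) /\
  (forall f g : R, D (f * g) = D f * g + f * D g).

Definition Rlinear (E F : lmodType R) (phi : E -> F) : Prop :=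
  forall (f : R) (e e' : E), phi (f *: e + e') = f *: phi e + phi e'.

Definition is_anchor (A : lmodType R) (rho : A -> R -> R) : Prop :=
  (forall a, is_derivation (rho a)) /\
  (forall (f : R) (a a' : A) (g : R), rho (f *: a + a') g = f * rho a g + rho a' g).

Definition lie_algebroid (A : lmodType R) (rho : A -> R -> R) (br : A -> A -> A)
  : Prop :=
  ((is_anchor rho) /\ (
      (forall (x : k) (a a' b : A), br ((x%:A : R) *: a + a') b
                                    = (x%:A : R) *: br a b + br a' b)) /\ ((forall (x : k) (a b b' : A), br a ((x%:A : R) *: b + b')
                                    = (x%:A : R) *: br a b + br a b')) /\ (
      (forall a : A, br a a = 0)) /\ (
      (forall a b c : A, br a (br b c) + br b (br c a) + br c (br a b) = 0)) /\ (
      (forall (a b : A) (f : R), br a (f *: b) = f *: br a b + rho a f *: b)) /\ (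
      (forall (a b : A) (f : R), rho (br a b) f = rho a (rho b f) - rho b (rho a f)))).

(* Lie algebroid morphism over the identity of M. *)
Definition lie_morphism (E F : lmodType R)
  (rhoE : E -> R -> R) (brE : E -> E -> E)
  (rhoF : F -> R -> R) (brF : F -> F -> F) (phi : E -> F) : Prop :=
  ((Rlinear phi) /\ ((forall (e : E) (f : R), rhoF (phi e) f = rhoE e f)) /\ ((forall e1 e2 : E, phi (brE e1 e2) = brF (phi e1) (phi e2)))).

Definition connection (A E : lmodType R) (rho : A -> R -> R) (nab : A -> E -> E)
  : Prop :=
  (((forall (f : R) (a a' : A) (e : E), nab (f *: a + a') e = f *: nab a e + nab a' e)) /\ ((forall (a : A) (e e' : E), nab a (e + e') = nab a e + nab a e')) /\ ((forall (a : A) (f : R) (e : E), nab a (f *: e) = f *: nab a e + rho a f *: e))).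

Definition curv (A E : lmodType R) (br : A -> A -> A) (nab : A -> E -> E)
  (a1 a2 : A) (e : E) : E :=
  nab a1 (nab a2 e) - nab a2 (nab a1 e) - nab (br a1 a2) e.

(* An element of Ω^2(A, Hom(B,C)): R-trilinear, alternating in A-arguments. *)
Definition hom_2form (A B C : lmodType R) (om : A -> A -> B -> C) : Prop :=
  (((forall (f : R) (a a' a2 : A) (b : B),
         om (f *: a + a') a2 b = f *: om a a2 b + om a' a2 b)) /\ ((forall (f : R) (a1 a a' : A) (b : B),
         om a1 (f *: a + a') b = f *: om a1 a b + om a1 a' b)) /\ ((forall (a1 a2 : A), Rlinear (om a1 a2))) /\ ((forall (a : A) (b : B), om a a b = 0))).

Definition nabla_hom (A B C : lmodType R) (nAB : A -> B -> B) (nAC : A -> C -> C)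
  (a : A) (phi : B -> C) (b : B) : C :=
  nAC a (phi b) - phi (nAB a b).

(* d_{nabla^Hom} om for om ∈ Ω^2(A, Hom(B,C)), evaluated at (a1,a2,a3) and b. *)
Definition d_hom2 (A B C : lmodType R) (br : A -> A -> A)
  (nAB : A -> B -> B) (nAC : A -> C -> C) (om : A -> A -> B -> C)
  (a1 a2 a3 : A) (b : B) : C :=
  nabla_hom nAB nAC a1 (om a2 a3) b - nabla_hom nAB nAC a2 (om a1 a3) b
  + nabla_hom nAB nAC a3 (om a1 a2) b
  - om (br a1 a2) a3 b + om (br a1 a3) a2 b - om (br a2 a3) a1 b.

Definition two_rep (A B C : lmodType R) (rho : A -> R -> R) (br : A -> A -> A)
  (dB : C -> B) (nAB : A -> B -> B) (nAC : A -> C -> C) (RA : A -> A -> B -> C)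
  : Prop :=
  ((Rlinear dB) /\ (connection rho nAB) /\ (connection rho nAC) /\ ((forall (a : A) (c : C), dB (nAC a c) = nAB a (dB c))) /\ (hom_2form RA) /\ ((forall (a1 a2 : A) (c : C), curv br nAC a1 a2 c = RA a1 a2 (dB c))) /\ ((forall (a1 a2 : A) (b : B), curv br nAB a1 a2 b = dB (RA a1 a2 b))) /\ ((forall (a1 a2 a3 : A) (b : B), d_hom2 br nAB nAC RA a1 a2 a3 b = 0))).

(* (d_{nabla^A} R_B)(a1,a2)(b1,b2), where R_B is viewed as a 1-form on A with
   values in ∧^2 B^* ⊗ C, a ↦ ((b1,b2) ↦ RB b1 b2 a), and nabla^A is the
   connection on ∧^2 B^* ⊗ C induced by nAB, nAC. *)
Definition d_mixed (A B C : lmodType R) (brA : A -> A -> A)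
  (nAB : A -> B -> B) (nAC : A -> C -> C) (RB : B -> B -> A -> C)
  (a1 a2 : A) (b1 b2 : B) : C :=
  (nAC a1 (RB b1 b2 a2) - RB (nAB a1 b1) b2 a2 - RB b1 (nAB a1 b2) a2)
  - (nAC a2 (RB b1 b2 a1) - RB (nAB a2 b1) b2 a1 - RB b1 (nAB a2 b2) a1)
  - RB b1 b2 (brA a1 a2).

Definition matched_pair (A B C : lmodType R)
  (rhoA : A -> R -> R) (brA : A -> A -> A) (rhoB : B -> R -> R) (brB : B -> B -> B)
  (dA : C -> A) (dB : C -> B)
  (nAB : A -> B -> B) (nAC : A -> C -> C) (RA : A -> A -> B -> C)
  (nBA : B -> A -> A) (nBC : B -> C -> C) (RB : B -> B -> A -> C) : Prop :=
  (( (forall (c : C) (f : R), rhoA (dA c) f = rhoB (dB c) f)) /\ ( (forall c1 c2 : C,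
         nAC (dA c1) c2 - nBC (dB c2) c1 = - nAC (dA c2) c1 + nBC (dB c1) c2)) /\ ( (forall (a : A) (c : C), brA a (dA c) = dA (nAC a c) - nBA (dB c) a)) /\ ( (forall (b : B) (c : C), brB b (dB c) = dB (nBC b c) - nAB (dA c) b)) /\ ( (forall (a : A) (b : B) (f : R),
         rhoA a (rhoB b f) - rhoB b (rhoA a f) = rhoB (nAB a b) f - rhoA (nBA b a) f)) /\ ( (forall (a : A) (b : B) (c : C),
         nBC b (nAC a c) - nAC a (nBC b c) - nAC (nBA b a) c + nBC (nAB a b) c
         = RB b (dB c) a - RA a (dA c) b)) /\ ( (forall (a1 a2 : A) (b : B),
         dA (RA a1 a2 b) = - nBA b (brA a1 a2) + brA (nBA b a1) a2 + brA a1 (nBA b a2)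
                           + nBA (nAB a2 b) a1 - nBA (nAB a1 b) a2)) /\ ( (forall (b1 b2 : B) (a : A),
         dB (RB b1 b2 a) = - nAB a (brB b1 b2) + brB (nAB a b1) b2 + brB b1 (nAB a b2)
                           + nAB (nBA b2 a) b1 - nAB (nBA b1 a) b2)) /\ ( (forall (a1 a2 : A) (b1 b2 : B),
         d_mixed brA nAB nAC RB a1 a2 b1 b2 = d_mixed brB nBA nBC RA b1 b2 a1 a2))).

Definition anchorC (A C : lmodType R) (rhoA : A -> R -> R) (dA : C -> A)
  (c : C) (f : R) : R := rhoA (dA c) f.

Definition bracketC (A B C : lmodType R) (dA : C -> A) (dB : C -> B)
  (nAC : A -> C -> C) (nBC : B -> C -> C) (c1 c2 : C) : C :=
  nAC (dA c1) c2 - nBC (dB c2) c1.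

End LieAlgebroids.

(* The bracket [c1, c2] = nabla_{dA c1} c2 - nabla_{dB c2} c1 is mapped by dA
   to [dA c1, dA c2] by (M3) and by dB to [dB c1, dB c2] by (M4), and its anchor
   rho_A o dA = rho_B o dB (M1) is R-linear.  (M2) is precisely the
   skew-symmetry of the bracket.  For the Jacobi identity, expanding [c1, [c2, c3]] and the
   two brackets [[c1, c2], c3], [[c1, c3], c2] leaves a combination of the two
   curvature identities R_{nabla^{AC}} = R_A o dB, R_{nabla^{BC}} = R_B o dA,
   the mixed condition (M6) and one instance of (M2); the curvature terms R_A,
   R_B cancel against those of (M6). *)
From HB Require Import structures.
From mathcomp Require Import all_boot all_order all_algebra.
Import GRing.Theory Num.Theory.
Local Open Scope ring_scope.

(* A reflexive decision procedure [abel] for identities in Z-modules: both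
   sides are read as Z-linear combinations of their maximal non-additive
   subterms, whose coefficients are then compared. *)

Inductive zmod_expr : Type :=
  | ZAtom of nat | ZAdd of zmod_expr & zmod_expr | ZOpp of zmod_expr | ZZero.

Fixpoint zmod_eval {V : zmodType} (env : seq V) (e : zmod_expr) : V :=
  match e with
  | ZAtom n => nth 0 env n
  | ZAdd e1 e2 => zmod_eval env e1 + zmod_eval env e2
  | ZOpp e1 => - zmod_eval env e1
  | ZZero => 0
  end.

Fixpoint zmod_coef (e : zmod_expr) (i : nat) : int :=
  match e with
  | ZAtom n => (n == i)%:R
  | ZAdd e1 e2 => zmod_coef e1 i + zmod_coef e2 i
  | ZOpp e1 => - zmod_coef e1 i
  | ZZero => 0
  end.

Fixpoint lincomb {V : zmodType} (env : seq V) (w : nat -> int) : V :=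
  if env is x :: env' then x *~ w 0%N + lincomb env' (fun i => w i.+1) else 0.

Fixpoint eq_coefs (n : nat) (w w' : nat -> int) : bool :=
  if n is n'.+1 then (w 0%N == w' 0%N) && eq_coefs n' (fun i => w i.+1) (fun i => w' i.+1)
  else true.

Section Lincomb.
Variable V : zmodType.

Lemma eq_lincomb (env : seq V) w w' : w =1 w' -> lincomb env w = lincomb env w'.
Proof. by elim: env w w' => [|x env IH] w w' //= ew; rewrite ew (IH _ (fun i => w' i.+1)). Qed.

Lemma lincomb0 (env : seq V) : lincomb env (fun _ => 0) = 0.
Proof. by elim: env => [|x env IH] //=; rewrite IH mulr0z addr0. Qed.

Lemma lincombD (env : seq V) w w' :
  lincomb env (fun i => w i + w' i) = lincomb env w + lincomb env w'.
Proof. by elim: env w w' => [|x env IH] w w' /=; rewrite ?addr0 // IH mulrzDr addrACA. Qed.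

Lemma lincombN (env : seq V) w : lincomb env (fun i => - w i) = - lincomb env w.
Proof. by elim: env w => [|x env IH] w /=; rewrite ?oppr0 // IH mulrNz opprD. Qed.

Lemma lincomb_nth (env : seq V) n : lincomb env (fun i => (n == i)%:R) = nth 0 env n.
Proof.
elim: env n => [|x env IH] [|n] //=.
- by rewrite mulr1z (@eq_lincomb _ _ (fun _ => 0)) ?lincomb0 ?addr0.
- by rewrite mulr0z add0r -IH.
Qed.

Lemma zmod_evalE (env : seq V) e : zmod_eval env e = lincomb env (zmod_coef e).
Proof.
elim: e => [n|e1 IH1 e2 IH2|e1 IH1|] /=.
- by rewrite lincomb_nth.
- by rewrite IH1 IH2 -lincombD.
- by rewrite IH1 -lincombN.
- by rewrite lincomb0.
Qed.

Lemma zmod_eval_eq (env : seq V) e e' :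
  eq_coefs (size env) (zmod_coef e) (zmod_coef e') -> zmod_eval env e = zmod_eval env e'.
Proof.
rewrite !zmod_evalE; elim: env (zmod_coef e) (zmod_coef e') => [|x env IH] w w' //=.
by case/andP=> /eqP -> /IH ->.
Qed.

End Lincomb.

Ltac zmod_same x y := constr:(ltac:(tryif unify x y then exact true else exact false) : bool).
Ltac zmod_mem x l :=
  match l with
  | nil => false
  | cons ?y ?l' => let b := zmod_same x y in
                   match b with true => true | false => zmod_mem x l' end
  end.
Ltac zmod_atoms t l :=
  match t with
  | (?a + ?b)%R => let l := zmod_atoms a l in zmod_atoms b l
  | (- ?a)%R => zmod_atoms a l
  | 0%R => l
  | _ => let b := zmod_mem t l in match b with true => l | false => constr:(cons t l) end
  end.
Ltac zmod_index x l :=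
  match l with
  | cons ?y ?l' => let b := zmod_same x y in
                   match b with
                   | true => constr:(0%N)
                   | false => let n := zmod_index x l' in constr:(S n)
                   end
  end.
Ltac zmod_reify t l :=
  match t with
  | (?a + ?b)%R => let ea := zmod_reify a l in let eb := zmod_reify b l in constr:(ZAdd ea eb)
  | (- ?a)%R => let ea := zmod_reify a l in constr:(ZOpp ea)
  | 0%R => constr:(ZZero)
  | _ => let n := zmod_index t l in constr:(ZAtom n)
  end.
Ltac abel :=
  match goal with |- @eq ?T ?l ?r =>
    let env := zmod_atoms l (@nil T) in let env := zmod_atoms r env in
    let el := zmod_reify l env in let er := zmod_reify r env in
    change (zmod_eval env el = zmod_eval env er);
    apply: zmod_eval_eq; vm_compute; reflexivity
  end.

Section Additive.
Context {U V : zmodType} {phi : U -> V}.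
Hypothesis phiD : {morph phi : x y / x + y}.

Lemma additive0 : phi 0 = 0.
Proof. by apply: (addIr (phi 0)); rewrite -phiD !add0r. Qed.

Lemma additiveN : {morph phi : x / - x}.
Proof. by move=> x; apply: (addrI (phi x)); rewrite -phiD !subrr additive0. Qed.

Lemma additiveB : {morph phi : x y / x - y}.
Proof. by move=> x y; rewrite phiD additiveN. Qed.

End Additive.

Lemma eq_lin_comb4 {V : zmodType} {x y l1 r1 l2 r2 l3 r3 l4 r4 : V} :
  l1 = r1 -> l2 = r2 -> l3 = r3 -> l4 = r4 ->
  x - y = (l1 - r1) + (l2 - r2) - (l3 - r3) + (l4 - r4) -> x = y.
Proof. by move=> -> -> -> ->; rewrite !subrr subr0 !addr0 => /eqP; rewrite subr_eq0 => /eqP. Qed.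

Section Algebroids.
Context {k : numFieldType} {R : comAlgType k}.

Lemma double_eq0 (V : lmodType R) (v : V) : v + v = 0 -> v = 0.
Proof.
move=> vv0; have <- : ((1 / 2%:R : k)%:A : R) *: (v + v) = v.
  by rewrite scalerDr -!scalerDl -splitr !scale1r.
by rewrite vv0 scaler0.
Qed.

Lemma derivation_scalar (D : R -> R) : is_derivation D -> forall x : k, D x%:A = 0.
Proof.
case=> Dlin DM x.
have DD : {morph D : f g / f + g} by move=> f g; have := Dlin 1 f g; rewrite !scale1r.
have D1 : D 1 = 0 by have := DM 1 1; rewrite !mulr1 mul1r -{1}[D 1]addr0 => /addrI.
by have := Dlin x 1 0; rewrite addr0 D1 (additive0 DD) scaler0 addr0.
Qed.

Section Linear.
Context {E F : lmodType R} {phi : E -> F}.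
Hypothesis phi_lin : Rlinear phi.

Lemma Rlinear_add : {morph phi : x y / x + y}.
Proof. by move=> x y; rewrite -[x]scale1r phi_lin !scale1r. Qed.

Lemma Rlinear_sub : {morph phi : x y / x - y}.
Proof. exact: additiveB Rlinear_add. Qed.

Lemma Rlinear_scale f e : phi (f *: e) = f *: phi e.
Proof. by rewrite -[f *: e]addr0 phi_lin (additive0 Rlinear_add) addr0. Qed.

End Linear.

Section Connection.
Context {A E : lmodType R} {rho : A -> R -> R} {nab : A -> E -> E}.
Hypothesis nab_conn : connection rho nab.

Lemma connection_addl e : {morph nab^~ e : a a' / a + a'}.
Proof. by case: nab_conn => lin _ a a'; rewrite -[a]scale1r lin !scale1r. Qed.

Lemma connection_subl e : {morph nab^~ e : a a' / a - a'}.
Proof. exact: additiveB (connection_addl e). Qed.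

Lemma connection_oppl e : {morph nab^~ e : a / - a}.
Proof. exact: additiveN (connection_addl e). Qed.

Lemma connection_scalel f a e : nab (f *: a) e = f *: nab a e.
Proof.
case: nab_conn => lin _.
by rewrite -[f *: a]addr0 lin (additive0 (connection_addl e)) addr0.
Qed.

Lemma connection_addr a : {morph nab a : e e' / e + e'}.
Proof. by case: nab_conn => _ [addr _]; apply: addr. Qed.

Lemma connection_subr a : {morph nab a : e e' / e - e'}.
Proof. exact: additiveB (connection_addr a). Qed.

Lemma connection_leibniz a f e : nab a (f *: e) = f *: nab a e + rho a f *: e.
Proof. by case: nab_conn => _ [_]; apply. Qed.

End Connection.

Lemma lie_algebroid_anticomm {A : lmodType R} {rho : A -> R -> R} {br : A -> A -> A} :
  lie_algebroid rho br -> forall a b, br a b = - br b a.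
Proof.
case=> _ [linl [linr [alt _]]] a b.
have addl x y z : br (x + y) z = br x z + br y z by have := linl 1 x y z; rewrite !scale1r.
have addr x y z : br z (x + y) = br z x + br z y by have := linr 1 z x y; rewrite !scale1r.
apply/eqP; rewrite -addr_eq0.
by have := alt (a + b); rewrite addl !addr !alt add0r addr0 => ->.
Qed.

Section MatchedPair.
Context {A B C : lmodType R}.
Context {rhoA : A -> R -> R} {brA : A -> A -> A} {rhoB : B -> R -> R} {brB : B -> B -> B}.
Context {dA : C -> A} {dB : C -> B}.
Context {nAB : A -> B -> B} {nAC : A -> C -> C} {RA : A -> A -> B -> C}.
Context {nBA : B -> A -> A} {nBC : B -> C -> C} {RB : B -> B -> A -> C}.

Hypotheses (anchorA : is_anchor rhoA)
  (rhoA_bracket : forall a1 a2 f, rhoA (brA a1 a2) f = rhoA a1 (rhoA a2 f) - rhoA a2 (rhoA a1 f)).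
Hypotheses (derB : forall b, is_derivation (rhoB b))
  (brB_anticomm : forall b1 b2, brB b1 b2 = - brB b2 b1).
Hypotheses (dA_lin : Rlinear dA) (dB_lin : Rlinear dB).
Hypotheses (connAC : connection rhoA nAC) (connBC : connection rhoB nBC).
Hypotheses (dA_nBC : forall b c, dA (nBC b c) = nBA b (dA c))
           (dB_nAC : forall a c, dB (nAC a c) = nAB a (dB c)).
Hypotheses (curvAC : forall a1 a2 c, curv brA nAC a1 a2 c = RA a1 a2 (dB c))
           (curvBC : forall b1 b2 c, curv brB nBC b1 b2 c = RB b1 b2 (dA c)).
Hypotheses
  (M2 : forall c1 c2, nAC (dA c1) c2 - nBC (dB c2) c1 = - nAC (dA c2) c1 + nBC (dB c1) c2)
  (M3 : forall a c, brA a (dA c) = dA (nAC a c) - nBA (dB c) a)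
  (M4 : forall b c, brB b (dB c) = dB (nBC b c) - nAB (dA c) b)
  (M6 : forall a b c, nBC b (nAC a c) - nAC a (nBC b c) - nAC (nBA b a) c + nBC (nAB a b) c
                      = RB b (dB c) a - RA a (dA c) b).

Local Notation rhoC := (anchorC rhoA dA).
Local Notation brC := (bracketC dA dB nAC nBC).

Lemma dA_bracketC c1 c2 : dA (brC c1 c2) = brA (dA c1) (dA c2).
Proof. by rewrite /bracketC (Rlinear_sub dA_lin) dA_nBC M3. Qed.

Lemma dB_bracketC c1 c2 : dB (brC c1 c2) = brB (dB c1) (dB c2).
Proof. by rewrite /bracketC (Rlinear_sub dB_lin) dB_nAC brB_anticomm M4 opprB. Qed.

Lemma bracketC_linearl (x : k) c c' c2 :
  brC ((x%:A : R) *: c + c') c2 = (x%:A : R) *: brC c c2 + brC c' c2.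
Proof.
rewrite /bracketC dA_lin; case: connAC => -> _.
rewrite (connection_addr connBC) (connection_leibniz connBC) derivation_scalar //.
by rewrite scale0r addr0 scalerBr; abel.
Qed.

Lemma bracketC_linearr (x : k) c c1 c1' :
  brC c ((x%:A : R) *: c1 + c1') = (x%:A : R) *: brC c c1 + brC c c1'.
Proof.
rewrite /bracketC dB_lin; case: connBC => -> _.
rewrite (connection_addr connAC) (connection_leibniz connAC) derivation_scalar; last first.
  by case: anchorA.
by rewrite scale0r addr0 scalerBr; abel.
Qed.

Lemma bracketC_addl c2 : {morph brC^~ c2 : c c' / c + c'}.
Proof. by move=> c c'; have := bracketC_linearl 1 c c' c2; rewrite !scale1r. Qed.

Lemma bracketC_addr c : {morph brC c : c1 c1' / c1 + c1'}.
Proof. by move=> c1 c1'; have := bracketC_linearr 1 c c1 c1'; rewrite !scale1r. Qed.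

Lemma bracketCC c : brC c c = 0.
Proof. by apply: double_eq0; rewrite /bracketC {1}M2; abel. Qed.

Lemma bracketC_anticomm c1 c2 : brC c1 c2 = - brC c2 c1.
Proof.
apply/eqP; rewrite -addr_eq0.
by have := bracketCC (c1 + c2); rewrite bracketC_addl !bracketC_addr !bracketCC add0r addr0 => ->.
Qed.

Lemma bracketC_derivation c1 c2 c3 :
  brC c1 (brC c2 c3) = brC (brC c1 c2) c3 - brC (brC c1 c3) c2.
Proof.
have hA := curvAC (dA c1) (dA c2) c3.
rewrite /curv -dA_bracketC /bracketC (Rlinear_sub dA_lin) (connection_subl connAC) in hA.
have hM6 := M6 (dA c1) (dB c3) c2; rewrite -dA_nBC -dB_nAC in hM6.
have hB := curvBC (dB c3) (dB c2) c1.
rewrite /curv brB_anticomm (connection_oppl connBC) in hB.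
have hM2 := M2 c2 (nAC (dA c1) c3).
rewrite {1}/bracketC dB_bracketC /bracketC !(connection_subr connAC) !(connection_subr connBC).
rewrite !(Rlinear_sub dA_lin) !(connection_subl connAC).
by refine (eq_lin_comb4 hA hM6 hB hM2 _); abel.
Qed.

Lemma bracketC_jacobi c1 c2 c3 :
  brC c1 (brC c2 c3) + brC c2 (brC c3 c1) + brC c3 (brC c1 c2) = 0.
Proof.
rewrite bracketC_derivation (bracketC_anticomm (brC c1 c2)) (bracketC_anticomm (brC c1 c3)).
rewrite (bracketC_anticomm c1 c3) (additiveN (bracketC_addr c2)).
by abel.
Qed.

Lemma bracketC_leibniz c1 c2 f : brC c1 (f *: c2) = f *: brC c1 c2 + rhoC c1 f *: c2.
Proof.
rewrite /bracketC /anchorC (connection_leibniz connAC) (Rlinear_scale dB_lin).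
by rewrite (connection_scalel connBC) scalerBr; abel.
Qed.

Lemma anchorC_bracket c1 c2 f : rhoC (brC c1 c2) f = rhoC c1 (rhoC c2 f) - rhoC c2 (rhoC c1 f).
Proof. by rewrite /anchorC dA_bracketC rhoA_bracket. Qed.

Lemma anchorC_is_anchor : is_anchor rhoC.
Proof.
case: anchorA => derA linA; split=> [c|f c c' g]; first exact: derA.
by rewrite /anchorC dA_lin linA.
Qed.

Lemma lie_algebroid_bracketC : lie_algebroid rhoC brC.
Proof.
exact: (conj anchorC_is_anchor (conj bracketC_linearl (conj bracketC_linearr
         (conj bracketCC (conj bracketC_jacobi (conj bracketC_leibniz anchorC_bracket)))))).
Qed.

End MatchedPair.

End Algebroids.

Theorem mainTheorem2 (k : numFieldType) (R : comAlgType k) (A B C : lmodType R)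
  (rhoA : A -> R -> R) (brA : A -> A -> A) (rhoB : B -> R -> R) (brB : B -> B -> B)
  (dA : C -> A) (dB : C -> B)
  (nAB : A -> B -> B) (nAC : A -> C -> C) (RA : A -> A -> B -> C)
  (nBA : B -> A -> A) (nBC : B -> C -> C) (RB : B -> B -> A -> C) :
  lie_algebroid rhoA brA ->
  lie_algebroid rhoB brB ->
  two_rep rhoA brA dB nAB nAC RA ->
  two_rep rhoB brB dA nBA nBC RB ->
  matched_pair rhoA brA rhoB brB dA dB nAB nAC RA nBA nBC RB ->
  [/\ lie_algebroid (anchorC rhoA dA) (bracketC dA dB nAC nBC),
      (forall (c : C) (f : R), anchorC rhoA dA c f = rhoB (dB c) f),
      lie_morphism (anchorC rhoA dA) (bracketC dA dB nAC nBC) rhoA brA dA &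
      lie_morphism (anchorC rhoA dA) (bracketC dA dB nAC nBC) rhoB brB dB].
Proof.
move=> LA LB TA TB MP.
have brB_anticomm := lie_algebroid_anticomm LB.
case: LA => anchorA [_ [_ [_ [_ [_ rhoA_bracket]]]]].
case: LB => [[derB _] _].
case: TA => dB_lin [_ [connAC [dB_nAC [_ [curvAC _]]]]].
case: TB => dA_lin [_ [connBC [dA_nBC [_ [curvBC _]]]]].
case: MP => M1 [M2 [M3 [M4 [_ [M6 _]]]]].
have dA_br := dA_bracketC dA_lin dA_nBC M3.
have dB_br := dB_bracketC brB_anticomm dB_lin dB_nAC M4.
split.
- exact: (lie_algebroid_bracketC anchorA rhoA_bracket derB brB_anticomm dA_lin dB_lin
            connAC connBC dA_nBC dB_nAC curvAC curvBC M2 M3 M4 M6).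
- exact: M1.
- by split; last split.
- split=> //; split=> // c f.
  by rewrite /anchorC M1.
Qed.
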